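(* Let $G$ be a bus graph, and let $G'$ be the bus graph obtained from $G$ by removing duplicate $\mathcal{C}$-vertices, i.e. keeping exactly one $\mathcal{C}$-vertex from each class of $\mathcal{C}$-vertices having identical neighborhoods in $\mathcal{B}$ (and deleting the others with their edges). Then $G$ is realizable if and only if $G'$ is realizable.
   Context: A bus graph is a finite bipartite graph $G=(\mathcal{B},\mathcal{C};\mathcal{E})$ with $\deg(c)\le 4$ for all $c\in\mathcal{C}$. A realization $\Gamma$ of $G$ in the integer grid is a drawing such that: (1) each $B\in\mathcal{B}$ is drawn as a closed line segment $\Gamma(B)$ along a grid line (a ''bus''); (2) each $c\in\mathcal{C}$ is drawn as a grid point $\Gamma(c)$ (a ''connector''); (3) each edge $(B,c)\in\mathcal{E}$ is drawn as a closed line segment along a grid line between a point of $\Gamma(B)$ and $\Gamma(c)$, perpendicular to $\Gamma(B)$, containing no connectors or buses other than $\Gamma(B)$ and $\Gamma(c)$ (an edge may meet the bus at an endpoint of the bus; edges may cross other edges); (4) no two buses or connectors intersect. $G$ is realizable if it has such a realization. *)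

From mathcomp Require Import all_boot all_order all_algebra.
Set Implicit Arguments. Unset Strict Implicit. Unset Printing Implicit Defensive.
Import Order.TTheory GRing.Theory Num.Theory.
Local Open Scope ring_scope.

(* A bipartite graph with finite vertex classes B (buses) and C (connectors),
   edge relation E b c. *)
Definition nbh (B C : finType) (E : B -> C -> bool) (c : C) : {set B} :=
  [set b | E b c].

Definition bus_graph (B C : finType) (E : B -> C -> bool) : Prop :=
  forall c : C, (#|nbh E c| <= 4)%N.

Definition point := (int * int)%type.

(* Axis-parallel segment: if [horiz] it is {(x, line) | lo <= x <= hi},
   otherwise {(line, y) | lo <= y <= hi}.  We only test lattice points. *)
Record segment := Seg { horiz : bool; line : int; lo : int; hi : int }.

Definition on_seg (s : segment) (p : point) : bool :=
  if horiz s then (p.2 == line s) && (lo s <= p.1 <= hi s)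
  else (p.1 == line s) && (lo s <= p.2 <= hi s).

(* The edge from bus s to connector point p: the segment perpendicular to s,
   along the grid line through p, from s's line to p. *)
Definition edge_seg (s : segment) (p : point) : segment :=
  if horiz s then Seg false p.1 (Num.min (line s) p.2) (Num.max (line s) p.2)
  else Seg true p.2 (Num.min (line s) p.1) (Num.max (line s) p.1).

(* The foot of the edge (on the line of s) lies on the bus s. *)
Definition edge_attaches (s : segment) (p : point) : bool :=
  if horiz s then lo s <= p.1 <= hi s else lo s <= p.2 <= hi s.

Definition is_realization (B C : finType) (E : B -> C -> bool)
    (bus : B -> segment) (conn : C -> point) : Prop :=
  (forall b, lo (bus b) <= hi (bus b)) /\
  (forall b1 b2, b1 <> b2 -> forall p, ~ (on_seg (bus b1) p /\ on_seg (bus b2) p)) /\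
  injective conn /\
  (forall b c, ~ on_seg (bus b) (conn c)) /\
  (forall b c, E b c ->
     edge_attaches (bus b) (conn c) /\
     (forall c', c' <> c -> ~ on_seg (edge_seg (bus b) (conn c)) (conn c')) /\
     (forall b', b' <> b -> forall p,
        ~ (on_seg (edge_seg (bus b) (conn c)) p /\ on_seg (bus b') p))).

Definition realizable (B C : finType) (E : B -> C -> bool) : Prop :=
  exists (bus : B -> segment) (conn : C -> point), is_realization E bus conn.

Definition dup_reps (B C : finType) (E : B -> C -> bool) (C' : {set C}) : Prop :=
  (forall c : C, exists2 c', c' \in C' & nbh E c' = nbh E c) /\
  {in C' &, forall c1 c2, nbh E c1 = nbh E c2 -> c1 = c2}.

Definition restrictC (B C : finType) (E : B -> C -> bool) (C' : {set C})
    : B -> {c : C | c \in C'} -> bool :=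
  fun b c => E b (val c).

From mathcomp Require Import all_boot all_order all_algebra.
Set Implicit Arguments. Unset Strict Implicit. Unset Printing Implicit Defensive.
Import Order.TTheory GRing.Theory Num.Theory.
Local Open Scope ring_scope.

(* Realizability is preserved under pulling the connectors back along any map
   f : C -> D.  Scale a realization by K = #|C| + 1, lengthen every bus by
   #|C| at its upper end, and draw connector c at K p + (i, i), where p is the
   point of f c and i is the index of c.  Distinct connectors then lie on
   distinct grid rows and columns, so no edge meets a foreign connector, and
   floor division by K maps every other forbidden intersection onto one of
   the original drawing.  Both directions of the theorem are instances: f is
   the inclusion of the representatives, or a choice of representative. *)

Lemma divzMDl_small (K a r : int) : 0 <= r < K -> ((a * K + r) %/ K)%Z = a.
Proof.
case/andP=> r_ge0 r_ltK; have K_gt0 : 0 < K by apply: le_lt_trans r_ltK.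
by rewrite divzMDl ?gt_eqF // divz_small ?addr0 // r_ge0 abszE gtr0_norm.
Qed.

Lemma modzMDl_small (K a r : int) : 0 <= r < K -> ((a * K + r) %% K)%Z = r.
Proof. by move=> rK; rewrite modzMDl modz_small. Qed.

Lemma divz_min (K x y : int) : 0 < K ->
  (Num.min x y %/ K)%Z = Num.min (x %/ K)%Z (y %/ K)%Z.
Proof.
move=> K_gt0; case: (leP x y) => [/lez_pdiv2r | /ltW /lez_pdiv2r] le_div.
  by rewrite min_l // le_div // ltW.
by rewrite min_r // le_div // ltW.
Qed.

Lemma divz_max (K x y : int) : 0 < K ->
  (Num.max x y %/ K)%Z = Num.max (x %/ K)%Z (y %/ K)%Z.
Proof.
move=> K_gt0; case: (leP x y) => [/lez_pdiv2r | /ltW /lez_pdiv2r] le_div.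
  by rewrite max_r // le_div // ltW.
by rewrite max_l // le_div // ltW.
Qed.

Section Blowup.

Variables (K m : int).
Hypothesis m_range : 0 <= m < K.

Let K_gt0 : 0 < K. Proof. by case/andP: m_range => /le_lt_trans; apply. Qed.
Let K_neq0 : K != 0. Proof. by rewrite gt_eqF. Qed.

Definition scale_seg (s : segment) : segment :=
  Seg (horiz s) (line s * K) (lo s * K) (hi s * K + m).

Definition blowup (r : int) (p : point) : point := (p.1 * K + r, p.2 * K + r).

Definition shrink (p : point) : point := ((p.1 %/ K)%Z, (p.2 %/ K)%Z).

Lemma shrink_blowup r p : 0 <= r < K -> shrink (blowup r p) = p.
Proof. by move=> rK; rewrite /shrink /= !divzMDl_small //; case: p. Qed.

Lemma offset_inj (a a' r r' : int) : 0 <= r < K -> 0 <= r' < K ->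
  a * K + r = a' * K + r' -> r = r'.
Proof. by move=> rK r'K e; rewrite -(modzMDl_small a rK) e modzMDl_small. Qed.

Lemma blowup_offset_inj r r' p p' : 0 <= r < K -> 0 <= r' < K ->
  blowup r p = blowup r' p' -> r = r'.
Proof. by move=> rK r'K [/(offset_inj rK r'K)]. Qed.

Lemma lo_le_hi_scale s : lo s <= hi s -> lo (scale_seg s) <= hi (scale_seg s).
Proof.
move=> le_lohi; apply: ler_wpDr; first by case/andP: m_range.
by rewrite ler_pM2r.
Qed.

Lemma shrink_between (x y z : int) :
  x <= y <= z -> (x %/ K)%Z <= (y %/ K)%Z <= (z %/ K)%Z.
Proof. by case/andP=> /(lez_pdiv2r (ltW K_gt0)) -> /(lez_pdiv2r (ltW K_gt0)). Qed.

Lemma on_seg_shrink s p : on_seg (scale_seg s) p -> on_seg s (shrink p).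
Proof.
case: s => [[] l a b]; rewrite /on_seg /=; case/andP=> /eqP -> /shrink_between;
  by rewrite !mulzK // divzMDl_small ?eqxx.
Qed.

Lemma on_edge_seg_shrink s q r p : 0 <= r < K ->
  on_seg (edge_seg (scale_seg s) (blowup r q)) p -> on_seg (edge_seg s q) (shrink p).
Proof.
move=> rK; case: s => [[] l a b]; rewrite /on_seg /edge_seg /=;
  case/andP=> /eqP -> /shrink_between;
  by rewrite divz_min // divz_max // !mulzK // !divzMDl_small ?eqxx.
Qed.

Lemma edge_attaches_scale s q r : 0 <= r <= m ->
  edge_attaches s q -> edge_attaches (scale_seg s) (blowup r q).
Proof.
case/andP=> r_ge0 r_lem; rewrite /edge_attaches /=.
by case: (horiz s) => /andP[le_lo le_hi]; apply/andP; (split;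
  [apply: ler_wpDr; rewrite // ler_pM2r | apply: lerD; rewrite // ler_pM2r]).
Qed.

Lemma on_edge_seg_blowup s q q' r r' : 0 <= r < K -> 0 <= r' < K ->
  on_seg (edge_seg (scale_seg s) (blowup r q)) (blowup r' q') -> r = r'.
Proof.
move=> rK r'K; rewrite /on_seg /edge_seg /=.
by case: (horiz s) => /= /andP[/eqP /offset_inj e _]; apply/esym/e.
Qed.

End Blowup.

Section Pullback.

Variables (B C D : finType) (E : B -> C -> bool) (E' : B -> D -> bool).
Variable f : C -> D.
Hypothesis E_comp : forall b c, E b c = E' b (f c).

Lemma is_realization_blowup (m : int) (j : C -> int) bus conn :
  0 <= m -> injective j -> (forall c, 0 <= j c <= m) -> is_realization E' bus conn ->
  is_realization E (scale_seg (m + 1) m \o bus)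
    (fun c => blowup (m + 1) (j c) (conn (f c))).
Proof.
move=> m_ge0 j_inj j_range [bus_lohi [bus_disj [_ [bus_conn edges]]]].
have m_range : 0 <= m < m + 1 by rewrite m_ge0 ltrDl.
have jK c : 0 <= j c < m + 1.
  by case/andP: (j_range c) => -> /le_lt_trans; apply; case/andP: m_range.
split; first by move=> b; apply: lo_le_hi_scale.
split.
  move=> b1 b2 b12 p [/(on_seg_shrink m_range) p1 /(on_seg_shrink m_range) p2].
  exact: bus_disj b12 _ (conj p1 p2).
split; first by move=> c c' /(blowup_offset_inj (jK c) (jK c')) /j_inj.
split.
  move=> b c /(on_seg_shrink m_range).
  by rewrite shrink_blowup //; apply: bus_conn.
move=> b c; rewrite E_comp => /edges [attach [_ avoid_bus]].
split; first exact: edge_attaches_scale.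
split; first by move=> c' c'c /(on_edge_seg_blowup (jK c) (jK c')) /j_inj /esym.
move=> b' b'b p [/(on_edge_seg_shrink m_range (jK c)) on_edge].
by move/(on_seg_shrink m_range)=> on_bus; apply: avoid_bus b'b _ (conj on_edge on_bus).
Qed.

Lemma realizable_comp : realizable E' -> realizable E.
Proof.
case=> bus [conn realized]; pose j (c : C) : int := (enum_rank c : nat)%:Z.
have j_inj : injective j by move=> c c' [/val_inj /enum_rank_inj].
have j_range c : 0 <= j c <= #|C|%:Z by rewrite /j lez_nat ltnW.
by do 2!eexists; apply: is_realization_blowup j_inj j_range realized.
Qed.

End Pullback.

Theorem lemma1 (B C : finType) (E : B -> C -> bool) (C' : {set C}) :
  bus_graph E -> dup_reps E C' ->
  (realizable E <-> realizable (@restrictC B C E C')).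
Proof.
move=> _ [has_rep _]; split; first exact: realizable_comp.
have rep c : {c' : {x | x \in C'} | nbh E (val c') == nbh E c}.
  by apply: sigW; have [c' c'C' /eqP eq_nbh] := has_rep c; exists (Sub c' c'C').
apply: (realizable_comp (f := fun c => sval (rep c))) => b c.
by have /eqP/setP/(_ b) := svalP (rep c); rewrite !inE.
Qed.
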